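(* If $\lambda$ is the partition associated with a gap sequence $\{w_1,\dots,w_g\}$, then $s_\lambda(t)$ does not depend on $t_i$ for every positive integer $i\notin\{w_1,\dots,w_g\}$.
   Context: For $t=(t_1,t_2,\dots)$ define $p_m(t)$ by $\exp(\sum_{m\ge1}t_mk^m)=\sum_{m\ge0}p_m(t)k^m$, $p_m=0$ for $m<0$; $s_\mu(t)=\det(p_{\mu_i-i+j}(t))_{1\le i,j\le l}$ for a partition $\mu=(\mu_1\ge\dots\ge\mu_l)$. A gap sequence of genus $g\ge1$ is a set $G=\{w_1<\dots<w_g\}\subset\mathbb Z_{\ge0}$ with $g$ elements whose complement in $\mathbb Z_{\ge0}$ contains $0$ and is closed under addition; its partition is $\lambda=(w_g,\dots,w_1)-(g-1,\dots,1,0)$. *)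

From HB Require Import structures.
From mathcomp Require Import all_boot all_order all_algebra.
Set Implicit Arguments. Unset Strict Implicit. Unset Printing Implicit Defensive.
Import Order.TTheory GRing.Theory Num.Theory.
Local Open Scope ring_scope.

(* Variables t = (t_1, t_2, ...) are modelled by a function t : nat -> R
   (the value t 0 is unused).  R is any numeric field (char 0, e.g. Q, R, C). *)

Definition tser (R : numFieldType) (N : nat) (t : nat -> R) : {poly R} :=
  \sum_(1 <= j < N.+1) t j *: 'X^j.

(* p_m(t) = coefficient of k^m in exp(sum_{m>=1} t_m k^m).  Only terms of
   degree <= m in k matter, so the series is truncated: exp is replaced by
   sum_{n<=m} X^n/n! and the inner sum by its terms up to degree m. *)
Definition pcoef (R : numFieldType) (m : nat) (t : nat -> R) : R :=
  (\sum_(n < m.+1) ((n`!)%:R)^-1 *: (tser m t) ^+ n)`_m.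

Definition pz (R : numFieldType) (z : int) (t : nat -> R) : R :=
  match z with Posz m => pcoef m t | Negz _ => 0 end.

(* s_mu(t) = det (p_{mu_i - i + j}(t))_{1<=i,j<=l}, mu given as a seq
   (mu_1, ..., mu_l); indices are 0-based here, mu_{i+1}-(i+1)+(j+1) = mu_{i+1}-i+j. *)
Definition schur (R : numFieldType) (mu : seq nat) (t : nat -> R) : R :=
  \det (\matrix_(i < size mu, j < size mu)
          pz ((nth 0%N mu i)%:Z - (i : nat)%:Z + (j : nat)%:Z) t).

Definition is_gap_sequence (G : seq nat) : Prop :=
  [/\ (0 < size G)%N, sorted ltn G, 0%N \notin G &
      forall a b : nat, a \notin G -> b \notin G -> (a + b)%N \notin G].

(* lambda = (w_g, ..., w_1) - (g-1, ..., 1, 0):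
   lambda_{k+1} = w_{g-k} - (g-1-k) for k = 0..g-1. *)
Definition gap_partition (G : seq nat) : seq nat :=
  mkseq (fun k => nth 0%N (rev G) k - ((size G).-1 - k))%N (size G).

From HB Require Import structures.
From mathcomp Require Import all_boot all_order all_algebra.
From mathcomp Require Import zify ring.
Set Implicit Arguments. Unset Strict Implicit. Unset Printing Implicit Defensive.
Import Order.TTheory GRing.Theory Num.Theory.
Local Open Scope ring_scope.

(* Changing t only in the coordinate i multiplies exp(sum_m t_m k^m) by
   exp(d k^i) with d = t'_i - t_i, hence p_m(t') = sum_j d^j/j! p_(m-ij)(t).
   Writing the Jacobi-Trudi matrix of lambda with rows indexed by the gaps,
   its entries are p_(w-c)(t) for a gap w and a column shift c.  Since the
   non-gaps are closed under addition and i is a non-gap, w - ij is again a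
   gap whenever it is nonnegative, so every row of the matrix for t' is a
   combination of the rows for t with unitriangular coefficients, and the
   determinant does not change. *)

Lemma sum_triangle (V : nmodType) N (F : nat -> nat -> V) :
  \sum_(n < N.+1) \sum_(a < n.+1) F a (n - a)%N =
  \sum_(a < N.+1) \sum_(b < N.+1 - a) F a b.
Proof.
elim: N => [|N IH]; first by rewrite !big_ord1.
rewrite big_ord_recr /= IH [RHS]big_ord_recr /= subSnn big_ord1.
rewrite [\sum_(a < N.+2) _]big_ord_recr /= subnn addrA; congr (_ + _).
rewrite -big_split /=; apply: eq_bigr => a _.
by rewrite [in RHS]subSn ?big_ord_recr // ltnW.
Qed.

Lemma big_ord_vanish (V : nmodType) n K (F : nat -> V) : (n <= K)%N ->
  (forall j, (n <= j)%N -> F j = 0) -> \sum_(j < K) F j = \sum_(j < n) F j.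
Proof.
move=> le_nK F0; rewrite -!(big_mkord xpredT) (big_cat_nat (leq0n n) le_nK) /=.
by rewrite [X in _ + X]big_nat_cond [X in _ + X]big1 ?addr0 // => j /andP[/andP[/F0]].
Qed.

Section TruncatedExp.
Variable R : numFieldType.
Implicit Types (p q : {poly R}) (t : nat -> R).

Definition vanish_below n p := forall j, (j < n)%N -> p`_j = 0.

Definition agree_upto m p q := forall k, (k <= m)%N -> p`_k = q`_k.

Lemma vanish_belowM m n p q :
  vanish_below m p -> vanish_below n q -> vanish_below (m + n) (p * q).
Proof.
move=> p0 q0 k lt_k; rewrite coefM big1 // => j _.
have [lt_jm | le_mj] := ltnP j m; first by rewrite p0 ?mul0r.
by rewrite q0 ?mulr0 //; have := ltn_ord j; lia.
Qed.

Lemma vanish_belowX n p : vanish_below 1 p -> vanish_below n (p ^+ n).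
Proof.
by move=> p0; elim: n => [//|n IH]; rewrite exprS -add1n; apply: vanish_belowM.
Qed.

Lemma agree_uptoM m p p' q q' :
  agree_upto m p p' -> agree_upto m q q' -> agree_upto m (p * q) (p' * q').
Proof.
move=> pp' qq' k le_km; rewrite !coefM; apply: eq_bigr => j _.
have lt_jk := ltn_ord j; rewrite pp' ?qq' //; lia.
Qed.

Lemma agree_uptoX m n p q : agree_upto m p q -> agree_upto m (p ^+ n) (q ^+ n).
Proof. by move=> pq; elim: n => [//|n IH]; rewrite !exprS; apply: agree_uptoM. Qed.

Definition texp N p : {poly R} := \sum_(n < N.+1) (n`!%:R)^-1 *: p ^+ n.

Definition exp_coef (d : R) j := (j`!%:R)^-1 * d ^+ j.

Lemma agree_texp m N p q : agree_upto m p q -> agree_upto m (texp N p) (texp N q).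
Proof.
move=> pq k le_km; rewrite !coef_sum; apply: eq_bigr => n _.
by rewrite !coefZ (agree_uptoX n pq).
Qed.

Lemma texp_widen m N p :
  vanish_below 1 p -> (m <= N)%N -> agree_upto m (texp N p) (texp m p).
Proof.
move=> p0 le_mN k le_km; rewrite !coef_sum.
have le_mN1 : (m.+1 <= N.+1)%N by [].
rewrite (big_ord_vanish (F := fun n => ((n`!%:R)^-1 *: p ^+ n)`_k) le_mN1) //.
move=> n lt_mn.
by rewrite coefZ vanish_belowX ?mulr0 //; lia.
Qed.

Lemma texpD N p q : vanish_below 1 p -> vanish_below 1 q ->
  agree_upto N (texp N (p + q)) (texp N p * texp N q).
Proof.
move=> p0 q0.
pose w a b := ((a`!%:R)^-1 * (b`!%:R)^-1) *: (p ^+ a * q ^+ b).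
have binomial : texp N (p + q) = \sum_(a < N.+1) \sum_(b < N.+1 - a) w a b.
  rewrite -sum_triangle; apply: eq_bigr => n _.
  rewrite addrC exprDn scaler_sumr; apply: eq_bigr => a _.
  have le_an : (a <= n)%N by rewrite -ltnS.
  rewrite /w [q ^+ _ * _]mulrC -scaler_nat scalerA; congr (_ *: _).
  rewrite -(bin_fact le_an) !natrM; field.
  by rewrite !pnatr_eq0 -!lt0n bin_gt0 le_an !fact_gt0.
have product : texp N p * texp N q = \sum_(a < N.+1) \sum_(b < N.+1) w a b.
  rewrite mulr_suml; apply: eq_bigr => a _; rewrite mulr_sumr.
  by apply: eq_bigr => b _; rewrite -scalerAl -scalerAr scalerA.
move=> k le_kN; rewrite binomial product !coef_sum; apply: eq_bigr => a _.
rewrite !coef_sum (big_ord_vanish (F := fun b => (w a b)`_k) (leq_subr a N.+1)) //.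
move=> b le_b.
have pq0 := vanish_belowM (vanish_belowX (n := a) p0) (vanish_belowX (n := b) q0).
by rewrite coefZ pq0 ?mulr0 //; have := ltn_ord a; lia.
Qed.

Lemma texp_monomial N (d : R) i :
  texp N (d *: 'X^i) = \sum_(j < N.+1) exp_coef d j *: 'X^(i * j).
Proof. by apply: eq_bigr => j _; rewrite exprZn scalerA -exprM. Qed.

Lemma coef_tser N t k : (tser N t)`_k = if (0 < k <= N)%N then t k else 0.
Proof.
rewrite coef_sum (eq_bigr (fun j => if j == k then t j else 0)).
  by rewrite -big_mkcond big_nat1_eq.
move=> j _; rewrite coefZ coefXn eq_sym.
by case: eqP => [->|]; rewrite ?mulr1 ?mulr0.
Qed.

Lemma tser_vanish N t : vanish_below 1 (tser N t).
Proof. by move=> j; rewrite ltnS leqn0 => /eqP ->; rewrite coef_tser. Qed.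

Lemma pcoef_texp m N t : (m <= N)%N -> pcoef m t = (texp N (tser N t))`_m.
Proof.
move=> le_mN; rewrite (texp_widen (tser_vanish N t) le_mN) //.
apply: (agree_texp (m := m)) => // k le_km; rewrite !coef_tser.
by case: k le_km => //= k le_km; rewrite le_km (leq_trans le_km le_mN).
Qed.

Lemma tser_update N i t t' : (0 < i <= N)%N -> (forall j, j != i -> t j = t' j) ->
  tser N t' = tser N t + (t' i - t i) *: 'X^i.
Proof.
move=> lt_0iN tt'; apply/polyP => k; rewrite coefD coefZ coefXn !coef_tser.
have [->|ne_ki] := eqVneq k i; first by rewrite lt_0iN mulr1 addrC subrK.
by rewrite mulr0 addr0 tt'.
Qed.

Lemma pcoef_update i t t' m N : (0 < i)%N -> (forall j, j != i -> t j = t' j) ->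
  (m + i <= N)%N ->
  pcoef m t' = \sum_(j < N.+1)
    exp_coef (t' i - t i) j * (if (i * j <= m)%N then pcoef (m - i * j) t else 0).
Proof.
move=> i_gt0 tt' le_miN; have le_mN : (m <= N)%N by lia.
have Xi_vanish : vanish_below 1 ((t' i - t i) *: 'X^i).
  by move=> j; rewrite ltnS leqn0 => /eqP ->; rewrite coefZ coefXn ltn_eqF ?mulr0.
rewrite (pcoef_texp t' le_mN) (tser_update _ tt'); last lia.
rewrite (texpD (tser_vanish N t) Xi_vanish le_mN) texp_monomial mulr_sumr coef_sum.
apply: eq_bigr => j _; rewrite -scalerAr coefZ coefMXn ltnNge.
have [le_ijm | _] := leqP (i * j) m; last by rewrite mulr0.
by rewrite -pcoef_texp //; lia.
Qed.

Lemma pz_lt0 (z : int) t : z < 0 -> pz z t = 0.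
Proof. by case: z. Qed.

Lemma pz_update i t t' (z : int) N : (0 < i)%N -> (forall j, j != i -> t j = t' j) ->
  z + i%:Z <= N%:Z ->
  pz z t' = \sum_(j < N.+1) exp_coef (t' i - t i) j * pz (z - (i * j)%:Z) t.
Proof.
move=> i_gt0 tt'; case: z => m le_zN; last first.
  by rewrite big1 // => j _; rewrite pz_lt0 ?mulr0 //; lia.
have le_miN : (m + i <= N)%N by lia.
rewrite /= (pcoef_update i_gt0 tt' le_miN); apply: eq_bigr => j _.
case: ifP => le_ijm; first by rewrite subzn.
by rewrite pz_lt0 //; lia.
Qed.

End TruncatedExp.

Section UnitriangularUpdate.
Variables (R : numFieldType) (g i : nat) (r : 'I_g -> nat).
Hypothesis i_gt0 : (0 < i)%N.
Hypothesis r_decr : {homo r : a b /~ (a < b)%N}.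
Hypothesis r_subMn_closed :
  forall a j, (i * j <= r a)%N -> exists a', r a' = (r a - i * j)%N.

Lemma sum_pz_subMn (c j : nat) a (t : nat -> R) :
  \sum_(a' | (r a' + i * j == r a)%N) pz ((r a')%:Z - c%:Z) t =
  pz ((r a)%:Z - c%:Z - (i * j)%:Z) t.
Proof.
have [le_ij | lt_ij] := leqP (i * j) (r a); last first.
  by rewrite big_pred0 ?pz_lt0 // => [|a']; [lia | apply/eqP; lia].
have r_inj : injective r.
  move=> a1 a2 r12; apply: val_inj; case: (ltngtP a1 a2) => // lt12.
    by have := r_decr lt12; rewrite r12 ltnn.
  by have := r_decr lt12; rewrite r12 ltnn.
have [a0 ra0] := r_subMn_closed le_ij.
rewrite (big_pred1 a0) ?ra0; first by congr (pz _ _); lia.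
move=> a' /=; apply/eqP/eqP => [e | ->]; last by rewrite ra0 subnK.
by apply: r_inj; rewrite ra0 -e addnK.
Qed.

Lemma det_pz_update (c : 'I_g -> nat) (t t' : nat -> R) :
  (forall j, j != i -> t j = t' j) ->
  \det (\matrix_(a, b) pz ((r a)%:Z - (c b)%:Z) t') =
  \det (\matrix_(a, b) pz ((r a)%:Z - (c b)%:Z) t).
Proof.
move=> tt'; set d := t' i - t i.
pose U : 'M[R]_g :=
  \matrix_(a, a') \sum_(j < (r a + i).+1 | (r a' + i * j == r a)%N) exp_coef d j.
have -> : \matrix_(a, b) pz ((r a)%:Z - (c b)%:Z) t' =
          U *m \matrix_(a, b) pz ((r a)%:Z - (c b)%:Z) t.
  apply/matrixP => a b; rewrite !mxE (pz_update (N := r a + i) i_gt0 tt'); last by lia.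
  under [RHS]eq_bigr do rewrite !mxE big_distrl /=.
  rewrite (exchange_big_dep xpredT) //=; apply: eq_bigr => j _.
  by rewrite -mulr_sumr sum_pz_subMn.
suff detU : \det U = 1 by rewrite det_mulmx detU mul1r.
rewrite -det_tr det_trig; last first.
  apply/is_trig_mxP => a b lt_ab; rewrite !mxE big_pred0 // => j.
  by apply/eqP; have := r_decr lt_ab; lia.
apply: big1 => a _; rewrite !mxE (big_pred1 ord0) => [|j].
  by rewrite /exp_coef invr1 mulr1.
apply/eqP/eqP => [rj | ->]; last by rewrite muln0 addn0.
move/eqP: rj; rewrite -[X in _ == X]addn0 eqn_add2l muln_eq0 gtn_eqF //= => /eqP j0.
exact: val_inj.
Qed.

End UnitriangularUpdate.

Lemma schur_shiftE (R : numFieldType) (mu s : seq nat) (t : nat -> R) :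
  (forall a, (a < size mu)%N -> (nth 0%N mu a + ((size mu).-1 - a))%N = nth 0%N s a) ->
  schur mu t =
  \det (\matrix_(a < size mu, b < size mu)
          pz ((nth 0%N s a)%:Z - ((size mu).-1 - b)%:Z) t).
Proof.
move=> shift; congr (\det _); apply/matrixP => a b; rewrite !mxE -shift //.
by congr (pz _ _); have := ltn_ord a; have := ltn_ord b; lia.
Qed.

Lemma leq_nth_sorted (s : seq nat) k :
  sorted ltn s -> (k < size s)%N -> (k <= nth 0%N s k)%N.
Proof.
move=> s_sorted; elim: k => [//|k IH] lt_ks.
have := @sorted_ltn_nth _ _ ltn_trans 0%N s s_sorted k k.+1 (ltnW lt_ks) lt_ks (ltnSn k).
by have := IH (ltnW lt_ks); lia.
Qed.

Lemma gap_partition_shift G : sorted ltn G ->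
  forall a, (a < size (gap_partition G))%N ->
  (nth 0%N (gap_partition G) a + ((size (gap_partition G)).-1 - a))%N =
  nth 0%N (rev G) a.
Proof.
move=> G_sorted a; rewrite size_mkseq => lt_aG; rewrite nth_mkseq // nth_rev //.
by have := leq_nth_sorted G_sorted (k := (size G - a.+1)%N); lia.
Qed.

Lemma gap_subMn G i x j : is_gap_sequence G -> i \notin G ->
  x \in G -> (i * j <= x)%N -> (x - i * j)%N \in G.
Proof.
case=> _ _ _ add_closed iG xG le_ijx.
have nongap_addMn y n : y \notin G -> (y + i * n)%N \notin G.
  elim: n => [|n IH] yG; first by rewrite muln0 addn0.
  by rewrite mulnS addnCA addnC add_closed ?IH.
by apply: contraLR xG => yG; rewrite -(subnK le_ijx) nongap_addMn.
Qed.

Theorem proposition2p2 (R : numFieldType) (G : seq nat) :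
  is_gap_sequence G ->
  forall i : nat, (0 < i)%N -> i \notin G ->
  forall t t' : nat -> R, (forall j : nat, j != i -> t j = t' j) ->
  schur (gap_partition G) t = schur (gap_partition G) t'.
Proof.
move=> gapG i i_gt0 iG t t' tt'.
have [_ G_sorted _ _] := gapG.
have size_la : size (gap_partition G) = size G by rewrite size_mkseq.
rewrite !(schur_shiftE _ (gap_partition_shift G_sorted)).
symmetry; apply: det_pz_update tt' => // [b a lt_ab | a j le_ija].
  have := ltn_ord a; have := ltn_ord b; rewrite !nth_rev -?size_la // => lt_bG lt_aG.
  by apply: (sorted_ltn_nth ltn_trans 0%N G_sorted); rewrite ?inE; lia.
have: (nth 0%N (rev G) a - i * j)%N \in rev G.
  by rewrite mem_rev (gap_subMn gapG) // -mem_rev mem_nth // size_rev -size_la.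
rewrite -index_mem size_rev -size_la => lt_idx.
by exists (Ordinal lt_idx); rewrite nth_index // -index_mem size_rev -size_la.
Qed.
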